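(* Let $(\mathsf P,\mathcal O)$ be a semitopology and $p\in\mathsf P$. Then $p$ is regular if and only if $p$ is weakly regular and unconflicted.
   Context: A semitopology is a pair $(\mathsf P,\mathcal O)$ where $\mathsf P$ is a set and $\mathcal O\subseteq\mathcal P(\mathsf P)$ contains $\varnothing$ and $\mathsf P$ and is closed under arbitrary unions. Write $X\between Y$ when $X\cap Y\neq\varnothing$. $T$ is topen when it is nonempty, open, and for all open $O,O'$, $O\between T\between O'$ implies $O\between O'$. Points $p,p'$ are intertwined (written $p\between p'$) when every open set containing $p$ intersects every open set containing $p'$; $I(p)$ is the set of points intertwined with $p$; $K(p)=\mathrm{int}(I(p))$ where $\mathrm{int}(R)$ is the union of all open subsets of $R$. $p$ is regular when $p\in K(p)$ and $K(p)$ is topen; weakly regular when $p\in K(p)$. $p$ is unconflicted when for all $p',p''$, $p'\between p$ and $p\between p''$ imply $p'\between p''$ (otherwise $p$ is conflicted). *)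

From Stdlib Require Import Classical.

Record semitopology : Type := {
  pts :> Type;
  is_open : (pts -> Prop) -> Prop;
  open_empty : is_open (fun _ => False);
  open_full : is_open (fun _ => True);
  open_union : forall (I : Type) (F : I -> pts -> Prop),
      (forall i, is_open (F i)) -> is_open (fun x => exists i, F i x)
}.

Section Defs.
Variable S : semitopology.

Definition meets (X Y : S -> Prop) : Prop := exists x, X x /\ Y x.

Definition topen (T : S -> Prop) : Prop :=
  (exists x, T x) /\ is_open S T /\
  forall O O', is_open S O -> is_open S O' -> meets O T -> meets T O' -> meets O O'.

Definition intertwined (p p' : S) : Prop :=
  forall O O', is_open S O -> is_open S O' -> O p -> O' p' -> meets O O'.

Definition I_set (p : S) : S -> Prop := fun p' => intertwined p p'.

Definition interior (R : S -> Prop) : S -> Prop :=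
  fun x => exists O, is_open S O /\ (forall y, O y -> R y) /\ O x.

Definition K_set (p : S) : S -> Prop := interior (I_set p).

Definition regular (p : S) : Prop := K_set p p /\ topen (K_set p).
Definition weakly_regular (p : S) : Prop := K_set p p.
Definition unconflicted (p : S) : Prop :=
  forall p' p'', intertwined p' p -> intertwined p p'' -> intertwined p' p''.
End Defs.

From Stdlib Require Import FunctionalExtensionality PropExtensionality.
From Corelib Require Import ssreflect.

Set Implicit Arguments.

(* Both directions rest on two general facts about semitopologies:
   - every point of a topen set is unconflicted: if p' ⋈ p ⋈ p'' and p lies in
     a topen T, then an open O ∋ p' meets T and T meets an open O' ∋ p'', so O
     meets O' by topen-ness;
   - a nonempty open set whose points are pairwise intertwined is topen: if O
     meets T at x and T meets O' at y, then x ⋈ y gives O ∩ O' ≠ ∅.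
   Since K(p) = int(I(p)) is open (interiors are open) and, for unconflicted p,
   any two points of I(p) are intertwined, K(p) is topen as soon as p ∈ K(p). *)

Section Semitopology.
Variable S : semitopology.

(* Interiors are open: int(R) is the union of the family of open subsets of R. *)
Lemma interior_open (R : S -> Prop) : is_open S (interior S R).
Proof.
  pose (OpenSub := {O : S -> Prop | is_open S O /\ forall y, O y -> R y}).
  have Hunion : is_open S (fun x => exists O : OpenSub, proj1_sig O x).
  { apply open_union => O. exact: (proj1 (proj2_sig O)). }
  replace (interior S R) with (fun x => exists O : OpenSub, proj1_sig O x); first exact: Hunion.
  apply: functional_extensionality => x; apply: propositional_extensionality; split.
  - by move=> [[O [HO HOR]] Ox]; exists O.
  - by move=> [O [HO [HOR Ox]]]; exists (exist _ O (conj HO HOR)).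
Qed.

Lemma interior_sub (R : S -> Prop) (x : S) : interior S R x -> R x.
Proof. by move=> [O [_ [HOR Ox]]]; apply: HOR. Qed.

Lemma meets_sym (X Y : S -> Prop) : meets S X Y -> meets S Y X.
Proof. by move=> [z [Xz Yz]]; exists z. Qed.

Lemma intertwined_sym (a b : S) : intertwined S a b -> intertwined S b a.
Proof.
  move=> Hab O O' HO HO' Ob O'a.
  exact: meets_sym (Hab O' O HO' HO O'a Ob).
Qed.

Lemma topen_point_unconflicted (T : S -> Prop) (p : S) :
  topen S T -> T p -> unconflicted S p.
Proof.
  move=> [_ [HTo Htrans]] Tp p' p'' Hp'p Hpp'' O O' HO HO' Op' O'p''.
  apply: (Htrans O O' HO HO').
  - exact: (Hp'p O T HO HTo Op' Tp).
  - exact: (Hpp'' T O' HTo HO' Tp O'p'').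
Qed.

Lemma pairwise_intertwined_topen (T : S -> Prop) :
  (exists x, T x) -> is_open S T ->
  (forall x y, T x -> T y -> intertwined S x y) -> topen S T.
Proof.
  move=> Hne HTo Hpair; split; first exact: Hne.
  split; first exact: HTo.
  move=> O O' HO HO' [x [Ox Tx]] [y [Ty O'y]].
  exact: (Hpair x y Tx Ty O O' HO HO' Ox O'y).
Qed.

Lemma unconflicted_K_pairwise (p : S) :
  unconflicted S p -> forall x y, K_set S p x -> K_set S p y -> intertwined S x y.
Proof.
  move=> Hu x y /interior_sub Hpx /interior_sub Hpy.
  exact: (Hu x y (intertwined_sym Hpx) Hpy).
Qed.

End Semitopology.

Theorem theorem5p28 (S : semitopology) (p : S) :
  regular S p <-> (weakly_regular S p /\ unconflicted S p).
Proof.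
  split.
  - move=> [HpK HKtopen]; split; first exact: HpK.
    exact: (topen_point_unconflicted HKtopen HpK).
  - move=> [HpK Hu]; split; first exact: HpK.
    apply: pairwise_intertwined_topen.
    + by exists p.
    + exact: interior_open.
    + exact: unconflicted_K_pairwise.
Qed.
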